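(* Consider the parallel randomized coordinate descent method (Algorithm 1): given an $\alpha$-proper distribution $P$ and $y^{(0)}\in\mathcal{B}$, at each iteration $k$ draw $C_{i_k}\sim P$ independently of the past; for every $r\in C_{i_k}$ set $y_r^{(k+1)}=\Pi_{\mathcal{B}_r,\theta^P_r}\big(y_r^{(k)}-(\theta^P_r)^{-1}\odot\nabla_rg(y^{(k)})\big)$, and set $y_r^{(k+1)}=y_r^{(k)}$ for $r\notin C_{i_k}$. Let $g^*=\min_{y\in\mathcal{B}}g(y)$. Then for all $k\ge0$, $$\mathbb{E}\Big[g(y^{(k)})-g^*+\tfrac12d^2_{\theta^P}(y^{(k)},\Xi)\Big]\le\Big[1-\frac{4\alpha}{N\|\theta^P\|_{1,\infty}+2}\Big]^k\Big[g(y^{(0)})-g^*+\tfrac12d^2_{\theta^P}(y^{(0)},\Xi)\Big].$$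
   Context: Let $N,R$ be positive integers; $F_r:2^{[N]}\to\mathbb{R}$ ($r\in[R]$) are submodular with $F_r(\emptyset)=0$, base polytopes $\mathcal{B}_r=\{u\in\mathbb{R}^N:\sum_{i\in S}u_i\le F_r(S)\ \forall S,\ \sum_iu_i=F_r([N])\}$, Lovász extensions $f_r(x)=\max_{u\in\mathcal{B}_r}\langle u,x\rangle$; $\mathcal{B}=\mathcal{B}_1\times\cdots\times\mathcal{B}_R$; $A:(\mathbb{R}^N)^R\to\mathbb{R}^N$, $Ay=\sum_ry_r$; $g(y)=\frac12\|Ay\|_2^2$, with block gradient $\nabla_rg(y)=Ay$. Element $i$ is incident to $F_r$ if $F_r(S\cup\{i\})\ne F_r(S)$ for some $S\subseteq[N]\setminus\{i\}$; $S_r$ is the set of elements incident to $F_r$ (points of $\mathcal{B}_r$ vanish outside $S_r$); assume every $i$ lies in some $S_r$. $\mu^C_i=|\{r\in C:i\in S_r\}|$ for $C\subseteq[R]$. $P$ on subsets of $[R]$ is $\alpha$-proper ($\alpha\in(0,1)$) if $\mathbb{P}_{C\sim P}(r\in C)=\alpha$ for all $r$; $\theta^P_r=\mathbb{E}_{C\sim P}[\mu^C\mid r\in C]$ (only its coordinates in $S_r$, which are $\ge1$, matter). $\odot$ and $(\cdot)^{-1}$ act element-wise. $\|z\|_{2,w}=\sqrt{\sum_iw_iz_i^2}$, $\Pi_{\Omega,w}(u)=\arg\min_{z\in\Omega}\|z-u\|_{2,w}$; $\|y\|_{2,\theta}=\sqrt{\sum_r\|y_r\|^2_{2,\theta_r}}$;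 $\|\theta\|_{1,\infty}=\sum_i\max_{r:i\in S_r}\theta_{r,i}$; $d_\theta(y,\mathcal{K})=\min_{z\in\mathcal{K}}\|y-z\|_{2,\theta}$. $x^*$ is the unique minimizer of $\sum_rf_r(x)+\frac12\|x\|_2^2$ and $\Xi=\{\xi\in\mathcal{B}:A\xi=-x^*\}$ (the set of minimizers of $g$ on $\mathcal{B}$). *)

From HB Require Import structures.
From mathcomp Require Import all_boot all_order all_algebra.
Set Implicit Arguments. Unset Strict Implicit. Unset Printing Implicit Defensive.
Import Order.TTheory GRing.Theory Num.Theory.
Local Open Scope ring_scope.

Section Defs.
Variables (K : realFieldType) (N nR : nat).

(* vectors in K^N are functions 'I_N -> K; block vectors y = (y_1..y_R) are
   functions 'I_nR -> 'I_N -> K. *)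

Definition submodular (Fr : {set 'I_N} -> K) : Prop :=
  forall A B : {set 'I_N}, Fr (A :|: B) + Fr (A :&: B) <= Fr A + Fr B.

Definition in_base (Fr : {set 'I_N} -> K) (u : 'I_N -> K) : Prop :=
  (forall S : {set 'I_N}, \sum_(i in S) u i <= Fr S) /\ \sum_i u i = Fr setT.

Definition in_Bprod (F : 'I_nR -> {set 'I_N} -> K) (y : 'I_nR -> 'I_N -> K) : Prop :=
  forall r, in_base (F r) (y r).

(* i is incident to F_r, i.e. i \in S_r *)
Definition incident (Fr : {set 'I_N} -> K) (i : 'I_N) : bool :=
  [exists S : {set 'I_N}, (i \notin S) && (Fr (i |: S) != Fr S)].

Definition mu (F : 'I_nR -> {set 'I_N} -> K) (C : {set 'I_nR}) (i : 'I_N) : nat :=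
  #|[set r in C | incident (F r) i]|.

Definition alpha_proper (P : {set 'I_nR} -> K) (alpha : K) : Prop :=
  [/\ 0 < alpha < 1, (forall C, 0 <= P C), \sum_(C : {set 'I_nR}) P C = 1 &
      forall r, \sum_(C : {set 'I_nR} | r \in C) P C = alpha].

Definition theta (F : 'I_nR -> {set 'I_N} -> K) (P : {set 'I_nR} -> K)
  (r : 'I_nR) (i : 'I_N) : K :=
  (\sum_(C : {set 'I_nR} | r \in C) P C * (mu F C i)%:R) / (\sum_(C : {set 'I_nR} | r \in C) P C).

Definition wnorm2 (w z : 'I_N -> K) : K := \sum_i w i * z i ^+ 2.

Definition bnorm2 (th y : 'I_nR -> 'I_N -> K) : K := \sum_r wnorm2 (th r) (y r).

Definition Aop (y : 'I_nR -> 'I_N -> K) (i : 'I_N) : K := \sum_r y r i.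

(* g(y) = 1/2 ||Ay||^2 ; its block gradient is Ay *)
Definition gfun (y : 'I_nR -> 'I_N -> K) : K := 2^-1 * \sum_i Aop y i ^+ 2.

Definition norm1inf (F : 'I_nR -> {set 'I_N} -> K) (th : 'I_nR -> 'I_N -> K) : K :=
  \sum_i \big[Num.max/0]_(r | incident (F r) i) th r i.

Definition is_min (T : Type) (S : T -> Prop) (f : T -> K) (m : K) : Prop :=
  (exists2 x, S x & f x = m) /\ (forall x, S x -> m <= f x).

Definition is_max (T : Type) (S : T -> Prop) (f : T -> K) (m : K) : Prop :=
  (exists2 x, S x & f x = m) /\ (forall x, S x -> f x <= m).

Definition lovasz_value (Fr : {set 'I_N} -> K) (x : 'I_N -> K) (v : K) : Prop :=
  is_max (in_base Fr) (fun u => \sum_i u i * x i) v.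

Definition is_wproj (S : ('I_N -> K) -> Prop) (w u z : 'I_N -> K) : Prop :=
  S z /\ forall z', S z' -> wnorm2 w (fun i => z i - u i) <= wnorm2 w (fun i => z' i - u i).

Definition Xi (F : 'I_nR -> {set 'I_N} -> K) (xstar : 'I_N -> K)
  (xi : 'I_nR -> 'I_N -> K) : Prop :=
  in_Bprod F xi /\ forall i, Aop xi i = - xstar i.

End Defs.

(* Let h be the full projected step from y (all blocks updated) and xi the point
   of Xi nearest to y in the theta-norm. Drawing C from an alpha-proper
   distribution applies each block of h with probability alpha, and the expected
   separable overapproximation E ||sum_(r in C) h_r||^2 <= alpha ||h||_theta^2
   (theta averages the overlaps mu^C) controls the expected value of g; the
   variational inequality of the projections, tested at xi, then brings the
   expectation of Phi = g - g* + d_theta^2(., Xi) / 2 after one step down to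
   (1 - alpha) (g - g* ) - alpha ||Ay + x*||^2 / 2 + d_theta^2(y, Xi) / 2.
   Two bounds close the argument: ||Ay + x*||^2 <= 2 (g - g* ), from the
   optimality of x* and the homogeneity of the Lovasz extensions, and the error
   bound d_theta^2(y, Xi) <= N ||theta||_(1,oo) / 2 ||Ay + x*||^2. For the
   latter, the exchange graph of y - xi (arcs i -> j inside the minimal tight sets
   of xi_r) is acyclic, since moving xi along a cycle would bring it closer to y;
   each coordinate of y_r - xi_r is then bracketed by the masses of y_r - xi_r on
   the ancestors and on the descendants of i, which sum over r to masses of the
   residual A (y - xi). *)

From HB Require Import structures.
From mathcomp Require Import all_boot all_order all_algebra.
From mathcomp Require Import ring lra.
Import Order.TTheory GRing.Theory Num.Theory.
Set Implicit Arguments. Unset Strict Implicit. Unset Printing Implicit Defensive.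
Local Open Scope ring_scope.

Section RealFacts.
Variable K : realFieldType.

Lemma sqr_sum_le_card_sumsq (I : finType) (A : pred I) (a : I -> K) :
  (\sum_(i in A) a i) ^+ 2 <= #|A|%:R * \sum_(i in A) a i ^+ 2.
Proof.
set s := \sum_(i in A) a i; set q := \sum_(i in A) a i ^+ 2.
have dev_ge0 : 0 <= \sum_(i in A) \sum_(j in A) (a i - a j) ^+ 2.
  by apply: sumr_ge0 => i _; apply: sumr_ge0 => j _; exact: sqr_ge0.
have dev_eq : \sum_(i in A) \sum_(j in A) (a i - a j) ^+ 2 = 2 * (#|A|%:R * q - s ^+ 2).
  transitivity (\sum_(i in A) (#|A|%:R * a i ^+ 2 - 2 * s * a i + q)).
    apply: eq_bigr => i _; rewrite /s /q mulr_natl -sumr_const mulr_sumr mulr_suml.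
    rewrite -sumrB -big_split /=; apply: eq_bigr => j _; ring.
  rewrite big_split sumrB /= -!mulr_sumr sumr_const -/q -/s -mulr_natl; ring.
rewrite mulr_natl; lra.
Qed.

Lemma sumsq_le_sqr_sum (I : finType) (A : pred I) (a : I -> K) :
  (forall i, A i -> 0 <= a i) ->
  \sum_(i in A) a i ^+ 2 <= (\sum_(i in A) a i) ^+ 2.
Proof.
move=> a_ge0; rewrite expr2 mulr_suml; apply: ler_sum => i Ai.
rewrite expr2 ler_wpM2l ?a_ge0 // (bigD1 i) //= lerDl.
by apply: sumr_ge0 => j /andP[/a_ge0].
Qed.

Lemma sqr_le_bracket (b x a : K) :
  b <= 0 <= a -> b <= x <= a -> x ^+ 2 <= a ^+ 2 + b ^+ 2.
Proof.
case/andP=> b_le0 a_ge0 /andP[bx xa]; have [x_ge0|x_lt0] := lerP 0 x.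
  have : 0 <= (a - x) * (a + x) by apply: mulr_ge0; lra.
  by have := sqr_ge0 b; rewrite !expr2; nra.
have : 0 <= (x - b) * (- x - b) by apply: mulr_ge0; lra.
by have := sqr_ge0 a; rewrite !expr2; nra.
Qed.

Lemma first_order_ge0 (X Y : K) :
  (forall t, 0 < t -> t <= 1 -> 0 <= 2 * t * X + t ^+ 2 * Y) -> 0 <= Y -> 0 <= X.
Proof.
move=> H Y_ge0; rewrite leNgt; apply/negP => X_lt0.
have YX_gt0 : 0 < Y - X by lra.
set t := - X / (Y - X).
have t_gt0 : 0 < t by rewrite divr_gt0 // oppr_gt0.
have t_le1 : t <= 1 by rewrite ler_pdivrMr // mul1r; lra.
have tY : t * Y <= - X.
  by rewrite mulrAC ler_pdivrMr // ler_pM2l ?oppr_gt0 //; lra.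
have := H t t_gt0 t_le1.
have -> : 2 * t * X + t ^+ 2 * Y = t * (2 * X + t * Y) by ring.
rewrite pmulr_rge0 //; lra.
Qed.

Lemma uniform_small_step (I : finType) (Q : I -> K -> Prop) :
  (forall i, exists2 e, 0 < e & forall e', 0 <= e' <= e -> Q i e') ->
  exists2 e, 0 < e & forall i e', 0 <= e' <= e -> Q i e'.
Proof.
move=> H; have /fin_all_exists[e He] : forall i, exists e : K,
    0 < e /\ forall e', 0 <= e' <= e -> Q i e'.
  by move=> i; have [e e_gt0 He] := H i; exists e.
exists (\big[Num.min/1]_i e i).
  by apply/bigmin_gtP; split=> // i _; case: (He i).
move=> i e' /andP[e'_ge0 e'_le]; apply: (He i).2; rewrite e'_ge0 /=.
exact: le_trans e'_le (bigmin_le _ _ _).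
Qed.

End RealFacts.

Section BasePolytope.
Variables (K : realFieldType) (N : nat).
Implicit Types (Fr : {set 'I_N} -> K) (u v d : 'I_N -> K) (S T : {set 'I_N}).

Lemma sum_setUI S T u :
  \sum_(i in S :|: T) u i + \sum_(i in S :&: T) u i = \sum_(i in S) u i + \sum_(i in T) u i.
Proof.
rewrite !(big_mkcond (fun i => i \in _)) -!big_split /=; apply: eq_bigr => i _.
by rewrite !inE; case: (i \in S); case: (i \in T); rewrite /= ?addr0 ?add0r.
Qed.

Lemma sum_setC_split S u : \sum_i u i = \sum_(i in S) u i + \sum_(i in ~: S) u i.
Proof. by rewrite (bigID (mem S)) /=; congr (_ + _); apply: eq_bigl => i; rewrite inE. Qed.

Lemma in_base_eq0 Fr u i : Fr set0 = 0 -> in_base Fr u -> ~~ incident Fr i -> u i = 0.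
Proof.
move=> F0 [u_le u_sum] /existsPn i_null.
have Fi : forall S, i \notin S -> Fr (i |: S) = Fr S.
  by move=> S iS; have := i_null S; rewrite iS /= negbK => /eqP.
have ui_le0 : u i <= 0.
  by have := u_le [set i]; rewrite big_set1 -(setU0 [set i]) Fi ?inE // F0.
have ui_ge0 : 0 <= u i.
  have := u_le (~: [set i]).
  rewrite -(Fi (~: [set i])) ?inE ?eqxx // setUCr -u_sum (sum_setC_split [set i]).
  by rewrite big_set1; lra.
lra.
Qed.

Lemma in_base_convex Fr u v (t : K) : in_base Fr u -> in_base Fr v -> 0 <= t <= 1 ->
  in_base Fr (fun i => u i + t * (v i - u i)).
Proof.
move=> [u_le u_sum] [v_le v_sum] /andP[t_ge0 t_le1]; split=> [S|]; last first.
  by rewrite big_split /= -mulr_sumr sumrB u_sum v_sum subrr mulr0 addr0.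
rewrite big_split /= -mulr_sumr sumrB.
have := u_le S; have := v_le S.
set a := \sum_(i in S) u i; set b := \sum_(i in S) v i => hb ha.
have : (1 - t) * a <= (1 - t) * Fr S by apply: ler_wpM2l; lra.
have : t * b <= t * Fr S by apply: ler_wpM2l.
lra.
Qed.

Section TightSets.
Variables (Fr : {set 'I_N} -> K) (u : 'I_N -> K).
Hypotheses (Fsub : submodular Fr) (F0 : Fr set0 = 0) (uB : in_base Fr u).

Definition tight S := \sum_(i in S) u i == Fr S.

Lemma tightT : tight setT.
Proof. by apply/eqP; rewrite -uB.2; apply: eq_bigl => i; rewrite inE. Qed.

Lemma tight0 : tight set0.
Proof. by rewrite /tight big_set0 F0. Qed.

(* Submodularity and [u(S) <= F(S)] force equality in [u(S :|: T) + u(S :&: T) <= F(S) + F(T)]. *)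
Lemma tightUI S T : tight S -> tight T -> tight (S :|: T) && tight (S :&: T).
Proof.
move=> /eqP uS /eqP uT; have := sum_setUI S T u; have := Fsub S T.
have := uB.1 (S :|: T); have := uB.1 (S :&: T).
by rewrite /tight; lra.
Qed.

Lemma tight_bigcup (I : finType) (Q : pred I) (G : I -> {set 'I_N}) :
  (forall i, Q i -> tight (G i)) -> tight (\bigcup_(i | Q i) G i).
Proof.
move=> H; apply: (big_ind tight) => //; first exact: tight0.
by move=> A B tA tB; case/andP: (tightUI tA tB).
Qed.

Lemma tight_bigcap (I : finType) (Q : pred I) (G : I -> {set 'I_N}) :
  (forall i, Q i -> tight (G i)) -> tight (\bigcap_(i | Q i) G i).
Proof.
move=> H; apply: (big_ind tight) => //; first exact: tightT.
by move=> A B tA tB; case/andP: (tightUI tA tB).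
Qed.

Definition min_tight i := \bigcap_(T | tight T && (i \in T)) T.

Lemma min_tight_tight i : tight (min_tight i).
Proof. by apply: tight_bigcap => T /andP[]. Qed.

Lemma min_tight_mem i : i \in min_tight i.
Proof. by apply/bigcapP => T /andP[]. Qed.

Lemma min_tight_sub i T : tight T -> i \in T -> min_tight i \subset T.
Proof. by move=> tT iT; apply: bigcap_inf; rewrite tT iT. Qed.

Lemma slack_gt0 :
  exists2 m, 0 < m & forall S, ~~ tight S -> m <= Fr S - \sum_(i in S) u i.
Proof.
exists (\big[Num.min/1]_(S | ~~ tight S) (Fr S - \sum_(i in S) u i)).
  apply/bigmin_gtP; split=> // S; rewrite /tight => ntS.
  by rewrite subr_gt0 lt_neqAle ntS uB.1.
by move=> S ntS; exact: bigmin_le_cond.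
Qed.

Lemma feasible_direction d :
  \sum_i d i = 0 -> (forall S, tight S -> \sum_(i in S) d i <= 0) ->
  exists2 e : K, 0 < e & forall e', 0 <= e' <= e -> in_base Fr (fun i => u i + e' * d i).
Proof.
move=> d_sum d_tight; have [m m_gt0 m_le] := slack_gt0.
set M := \sum_i `|d i| + 1.
have M_gt0 : 0 < M by rewrite ltr_wpDl // sumr_ge0.
have dS_le : forall S, \sum_(i in S) d i <= M.
  move=> S; apply: (@le_trans _ _ (\sum_(i in S) `|d i|)).
    by apply: ler_sum => i _; exact: ler_norm.
  rewrite /M ler_wpDr //.
  by rewrite (sum_setC_split S) lerDl sumr_ge0.
exists (m / M); first by rewrite divr_gt0.
move=> e /andP[e_ge0 e_le]; split=> [S|]; last first.
  by rewrite big_split /= -mulr_sumr d_sum mulr0 addr0 uB.2.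
rewrite big_split /= -mulr_sumr; have uS := uB.1 S.
have [tS|ntS] := boolP (tight S).
  by have := mulr_ge0_le0 e_ge0 (d_tight S tS); lra.
have edS : e * \sum_(i in S) d i <= m.
  have [dS_le0|dS_gt0] := lerP (\sum_(i in S) d i) 0.
    by apply: le_trans (mulr_ge0_le0 e_ge0 dS_le0) _; exact: ltW.
  apply: le_trans (ler_pM e_ge0 (ltW dS_gt0) e_le (dS_le S)) _.
  by rewrite divfK ?gt_eqF.
by have := m_le S ntS; lra.
Qed.

End TightSets.
End BasePolytope.

Section Norms.
Variables (K : realFieldType) (N nR : nat).

Lemma wnorm2_ge0 (w z : 'I_N -> K) : (forall i, 0 <= w i) -> 0 <= wnorm2 w z.
Proof. by move=> w_ge0; apply: sumr_ge0 => i _; rewrite mulr_ge0 ?sqr_ge0. Qed.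

Lemma bnorm2_ge0 (th y : 'I_nR -> 'I_N -> K) :
  (forall r i, 0 <= th r i) -> 0 <= bnorm2 th y.
Proof. by move=> th_ge0; apply: sumr_ge0 => r _; exact: wnorm2_ge0. Qed.

Lemma wnorm2_addZ (w a b : 'I_N -> K) (t : K) :
  wnorm2 w (fun i => a i + t * b i) =
  wnorm2 w a + 2 * t * \sum_i w i * a i * b i + t ^+ 2 * wnorm2 w b.
Proof.
rewrite /wnorm2 [2 * t * _]mulr_sumr [t ^+ 2 * _]mulr_sumr -!big_split /=.
by apply: eq_bigr => i _; ring.
Qed.

Lemma bnorm2_addZ (th a b : 'I_nR -> 'I_N -> K) (t : K) :
  bnorm2 th (fun r i => a r i + t * b r i) =
  bnorm2 th a + 2 * t * \sum_r \sum_i th r i * a r i * b r i + t ^+ 2 * bnorm2 th b.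
Proof.
rewrite /bnorm2 [2 * t * _]mulr_sumr [t ^+ 2 * _]mulr_sumr -!big_split /=.
by apply: eq_bigr => r _; rewrite wnorm2_addZ.
Qed.

End Norms.

Section Indicators.
Variables (K : realFieldType) (N : nat) (a : 'I_N).

Lemma sum_indicator : \sum_k (k == a)%:R = 1 :> K.
Proof. by rewrite (bigD1 a) //= eqxx big1 ?addr0 // => k /negbTE ->. Qed.

Lemma sum_mul_indicator (f : 'I_N -> K) : \sum_k f k * (k == a)%:R = f a.
Proof. by rewrite (bigD1 a) //= eqxx mulr1 big1 ?addr0 // => k /negbTE ->; rewrite mulr0. Qed.

Lemma sum_indicator_set (S : {set 'I_N}) : \sum_(k in S) (k == a)%:R = (a \in S)%:R :> K.
Proof.
case: (boolP (a \in S)) => aS; first by rewrite (bigD1 a) //= eqxx big1 ?addr0 // => k /andP[_ /negbTE ->].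
by rewrite big1 // => k kS; case: eqP kS aS => // ->->.
Qed.

End Indicators.

Section ErrorBound.
Variables (K : realFieldType) (N nR : nat) (F : 'I_nR -> {set 'I_N} -> K)
  (th y xi : 'I_nR -> 'I_N -> K).
Hypotheses (Fsub : forall r, submodular (F r)) (F0 : forall r, F r set0 = 0)
  (yB : in_Bprod F y) (xiB : in_Bprod F xi)
  (th_ge0 : forall r i, 0 <= th r i)
  (th_pos : forall r i, incident (F r) i -> 0 < th r i)
  (xi_opt : forall xi', in_Bprod F xi' -> (forall i, Aop xi' i = Aop xi i) ->
     bnorm2 th (fun r i => y r i - xi r i) <= bnorm2 th (fun r i => y r i - xi' r i)).

Let delta r i := y r i - xi r i.

Lemma delta_sum r : \sum_k delta r k = 0.
Proof. by rewrite sumrB (yB r).2 (xiB r).2 subrr. Qed.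

Lemma incident_delta r i : delta r i != 0 -> incident (F r) i.
Proof.
apply: contraR => ni; rewrite /delta (in_base_eq0 (F0 r) (yB r) ni).
by rewrite (in_base_eq0 (F0 r) (xiB r) ni) subrr.
Qed.

(* The hypotheses on [d] keep [xi + t d] in [B] with the same image under [A]
   for small [t >= 0], so minimality of [xi] kills the first-order term. *)
Lemma nearest_first_order (d : 'I_nR -> 'I_N -> K) :
  (forall r, \sum_k d r k = 0) ->
  (forall r S, tight (F r) (xi r) S -> \sum_(k in S) d r k <= 0) ->
  (forall k, \sum_r d r k = 0) ->
  \sum_r \sum_k th r k * delta r k * d r k <= 0.
Proof.
move=> d_sum d_tight d_bal.
have [e e_gt0 He] := uniform_small_step (fun r =>
  feasible_direction (xiB r) (d_sum r) (d_tight r)).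
set X := \sum_r _; set Y := bnorm2 th d.
suff : 0 <= - (e * X) by rewrite oppr_ge0 pmulr_rle0.
apply: (@first_order_ge0 _ _ (e ^+ 2 * Y)) => [t t_gt0 t_le1|]; last first.
  by rewrite mulr_ge0 ?sqr_ge0 ?bnorm2_ge0.
have et : 0 <= e * t <= e by rewrite ger_pMr // t_le1 andbT mulr_ge0 ?ltW.
have A_eq : forall i, Aop (fun r i => xi r i + e * t * d r i) i = Aop xi i.
  by move=> i; rewrite /Aop big_split /= -mulr_sumr d_bal mulr0 addr0.
have := xi_opt (fun r => He r _ et) A_eq.
have -> : bnorm2 th (fun r i => y r i - (xi r i + e * t * d r i)) =
          bnorm2 th (fun r i => delta r i + (- (e * t)) * d r i).
  by apply: eq_bigr => r _; apply: eq_bigr => i _; rewrite /delta; congr (_ * _ ^+ 2); ring.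
rewrite bnorm2_addZ -/X -/Y.
have -> : 2 * t * - (e * X) + t ^+ 2 * (e ^+ 2 * Y) =
          2 * - (e * t) * X + (- (e * t)) ^+ 2 * Y by ring.
lra.
Qed.

(* [i -> j] is an arc when block [r] can move mass from [i] to [j]: [xi r]
   stays in its base polytope and the move brings [xi r] closer to [y r]. *)
Definition arc r i j :=
  [&& 0 < delta r i, delta r j < 0 & j \in min_tight (F r) (xi r) i].

Definition arc_rel : rel 'I_N := fun i j => [exists r, arc r i j].

Variable r0 : 'I_nR.

Let arc_label (ij : 'I_N * 'I_N) := odflt r0 [pick r | arc r ij.1 ij.2].

Lemma arc_labelP ij : arc_rel ij.1 ij.2 -> arc (arc_label ij) ij.1 ij.2.
Proof. by rewrite /arc_label; case: pickP => [r //|H /existsP[r]]; rewrite H. Qed.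

Lemma sum_by_label (ws : seq ('I_N * 'I_N)) (G : 'I_nR -> 'I_N * 'I_N -> K) :
  \sum_r \sum_(ij <- ws | arc_label ij == r) G r ij = \sum_(ij <- ws) G (arc_label ij) ij.
Proof.
rewrite (exchange_big_dep xpredT) //=; apply: eq_bigr => ij _.
by rewrite (big_pred1 (arc_label ij)) // => r; rewrite eq_sym.
Qed.

Definition walk_flow (ws : seq ('I_N * 'I_N)) r k : K :=
  \sum_(ij <- ws | arc_label ij == r) ((k == ij.1)%:R - (k == ij.2)%:R).

Lemma walk_flow_sum ws r : \sum_k walk_flow ws r k = 0.
Proof. by rewrite exchange_big /= big1 // => ij _; rewrite sumrB !sum_indicator subrr. Qed.

Lemma walk_flow_balance ws k :
  \sum_r walk_flow ws r k = \sum_(ij <- ws) ((k == ij.1)%:R - (k == ij.2)%:R).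
Proof. exact: (sum_by_label ws (fun _ ij => (k == ij.1)%:R - (k == ij.2)%:R)). Qed.

Lemma walk_flow_tight ws r S : all (fun ij => arc_rel ij.1 ij.2) ws ->
  tight (F r) (xi r) S -> \sum_(k in S) walk_flow ws r k <= 0.
Proof.
move=> ws_arcs tS; rewrite exchange_big /= big_seq_cond.
apply: sumr_le0 => ij /andP[ij_ws /eqP lab_ij].
rewrite sumrB !sum_indicator_set subr_le0.
have /and3P[_ _ ij_tight] := arc_labelP (allP ws_arcs ij ij_ws); rewrite lab_ij in ij_tight.
case iS: (ij.1 \in S); last by case: (ij.2 \in S).
by rewrite (subsetP (min_tight_sub tS iS) _ ij_tight).
Qed.

(* Each arc moves mass from a coordinate where [y] exceeds [xi] to one where
   it falls short, so the flow decreases the distance to first order. *)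
Lemma walk_flow_descent ws : ws != [::] -> all (fun ij => arc_rel ij.1 ij.2) ws ->
  0 < \sum_r \sum_k th r k * delta r k * walk_flow ws r k.
Proof.
move=> ws_n0 ws_arcs.
have -> : \sum_r \sum_k th r k * delta r k * walk_flow ws r k =
   \sum_(ij <- ws) (th (arc_label ij) ij.1 * delta (arc_label ij) ij.1
                    - th (arc_label ij) ij.2 * delta (arc_label ij) ij.2).
  rewrite -(sum_by_label ws (fun r ij => th r ij.1 * delta r ij.1 - th r ij.2 * delta r ij.2)).
  apply: eq_bigr => r _; under eq_bigr => k _ do rewrite mulr_sumr.
  rewrite exchange_big /=; apply: eq_bigr => ij _.
  by under eq_bigr => k _ do rewrite mulrBr; rewrite sumrB !sum_mul_indicator.
have term_gt0 ij : ij \in ws -> 0 < th (arc_label ij) ij.1 * delta (arc_label ij) ij.1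
                               - th (arc_label ij) ij.2 * delta (arc_label ij) ij.2.
  move=> ij_ws; have /and3P[i_pos j_neg _] := arc_labelP (allP ws_arcs ij ij_ws).
  set r := arc_label ij.
  have th_i : 0 < th r ij.1 by apply/th_pos/incident_delta; rewrite gt_eqF.
  have : th r ij.2 * delta r ij.2 <= 0 by rewrite mulr_ge0_le0 ?th_ge0 ?ltW.
  by have := mulr_gt0 th_i i_pos; lra.
have /hasP[ij0 ij0_ws _] : has predT ws by rewrite has_predT lt0n size_eq0.
rewrite big_seq lt_def psumr_neq0 => [|ij /term_gt0/ltW //].
apply/andP; split; first by apply/hasP; exists ij0; rewrite ?ij0_ws ?term_gt0.
by apply: sumr_ge0 => ij /term_gt0/ltW.
Qed.

Lemma no_closed_arc_walk (ws : seq ('I_N * 'I_N)) : ws != [::] ->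
  all (fun ij => arc_rel ij.1 ij.2) ws ->
  (forall k, \sum_(ij <- ws) ((k == ij.1)%:R - (k == ij.2)%:R) = 0 :> K) -> False.
Proof.
move=> ws_n0 ws_arcs ws_bal.
have := nearest_first_order (walk_flow_sum ws) (fun r S => walk_flow_tight ws_arcs)
  (fun k => etrans (walk_flow_balance ws k) (ws_bal k)).
by rewrite leNgt walk_flow_descent.
Qed.

Lemma arc_acyclic i j : arc_rel i j -> connect arc_rel j i -> False.
Proof.
move=> ij /connectP[p p_path p_last].
have telescope (f : 'I_N -> K) a :
    \sum_(ab <- zip (a :: p) p) (f ab.1 - f ab.2) = f a - f (last a p).
  elim: p {p_path p_last} a => [|x p IHp] a /=; first by rewrite big_nil subrr.
  by rewrite big_cons IHp /=; ring.
have walk : all (fun ab => arc_rel ab.1 ab.2) (zip (j :: p) p).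
  by elim: p {p_last telescope} (j) p_path => [|x p IHp] a //= /andP[-> /IHp].
apply: (@no_closed_arc_walk ((i, j) :: zip (j :: p) p)) => //=; first by rewrite ij.
by move=> k; rewrite big_cons (telescope (fun a => (k == a)%:R)) -p_last /=; ring.
Qed.

Definition pred_closed (U : {set 'I_N}) := forall k j, j \in U -> arc_rel k j -> k \in U.

(* The union of the minimal tight sets of the positive coordinates outside a
   predecessor-closed [U] is tight for [xi r] and contains every negative
   coordinate outside [U]. *)
Lemma pred_closed_mass_ge0 U r : pred_closed U -> 0 <= \sum_(j in U) delta r j.
Proof.
move=> U_closed.
set T := \bigcup_(i | (0 < delta r i) && (i \notin U)) min_tight (F r) (xi r) i.
have T_tight : tight (F r) (xi r) T.
  by apply: (tight_bigcup (Fsub r) (F0 r) (xiB r)) => i _; exact: min_tight_tight.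
have T_le0 : \sum_(j in T) delta r j <= 0.
  by rewrite sumrB (eqP T_tight); have := (yB r).1 T; lra.
suff : \sum_(j in ~: U) delta r j <= \sum_(j in T) delta r j.
  by have := sum_setC_split U (delta r); rewrite delta_sum; lra.
rewrite [leLHS]big_mkcond [leRHS]big_mkcond /=; apply: ler_sum => j _; rewrite inE.
have [d_pos|d_le0] := ltrP 0 (delta r j).
  case: (boolP (j \in U)) => jU /=; first by case: ifP => // _; exact: ltW.
  suff -> : j \in T by [].
  by apply/bigcupP; exists j; rewrite ?d_pos ?jU //; exact: min_tight_mem.
case: (boolP (j \in U)) => jU /=; last by case: ifP.
case: ifP => // /bigcupP[i /andP[i_pos iU] j_tight].
have [d0|d_neg] := eqVneq (delta r j) 0; first by rewrite d0.
have /(U_closed _ _ jU) : arc_rel i j.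
  by apply/existsP; exists r; rewrite /arc i_pos lt_neqAle d_neg d_le0.
by rewrite (negbTE iU).
Qed.

Lemma succ_closed_mass_le0 W r :
  pred_closed (~: W) -> \sum_(j in W) delta r j <= 0.
Proof.
move/(pred_closed_mass_ge0 r); have := sum_setC_split W (delta r).
by rewrite delta_sum; lra.
Qed.

Let ancestors i := [set k | connect arc_rel k i].
Let descendants i := [set k | connect arc_rel i k].

Lemma ancestors_mass r i :
  0 <= \sum_(k in ancestors i) delta r k /\ delta r i <= \sum_(k in ancestors i) delta r k.
Proof.
have anc_closed : pred_closed (ancestors i).
  by move=> k j; rewrite !inE => ji kj; exact: connect_trans (connect1 kj) ji.
have anc'_closed : pred_closed (ancestors i :\ i).
  move=> k j; rewrite !inE => /andP[j_ne ji] kj.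
  rewrite (connect_trans (connect1 kj) ji) andbT.
  by apply/eqP => ki; subst k; exact: arc_acyclic kj ji.
split; first exact: pred_closed_mass_ge0.
rewrite (big_setD1 i) ?inE ?connect0 //= lerDl; exact: pred_closed_mass_ge0.
Qed.

Lemma descendants_mass r i :
  \sum_(k in descendants i) delta r k <= 0 /\ \sum_(k in descendants i) delta r k <= delta r i.
Proof.
have desc_closed : pred_closed (~: descendants i).
  move=> k j; rewrite !inE => ij kj; apply: contra ij => ik.
  exact: connect_trans ik (connect1 kj).
have desc'_closed : pred_closed (~: (descendants i :\ i)).
  move=> k j; rewrite !inE negb_and negbK => j_cases kj.
  apply/negP => /andP[k_ne ik]; have ij := connect_trans ik (connect1 kj).
  by move: j_cases; rewrite ij orbF => /eqP ji; subst j; exact: arc_acyclic kj ik.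
split; first exact: succ_closed_mass_le0.
rewrite (big_setD1 i) ?inE ?connect0 //= gerDl; exact: succ_closed_mass_le0.
Qed.

Let z k := \sum_r delta r k.

Lemma residual_set_bound (W : {set 'I_N}) :
  `|\sum_(k in W) z k| <= (\sum_k `|z k|) / 2.
Proof.
have z_sum : \sum_k z k = 0.
  by rewrite exchange_big big1 // => r _; exact: delta_sum.
have zC : \sum_(k in ~: W) z k = - \sum_(k in W) z k.
  by have := sum_setC_split W z; rewrite z_sum; lra.
have zW : `|\sum_(k in W) z k| <= \sum_(k in W) `|z k| by exact: ler_norm_sum.
have : `|\sum_(k in ~: W) z k| <= \sum_(k in ~: W) `|z k| by exact: ler_norm_sum.
rewrite zC normrN.
by have := sum_setC_split W (fun k => `|z k|); rewrite ler_pdivlMr //; lra.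
Qed.

(* [delta r i] lies between the masses of [delta r] on the descendants of [i]
   (nonpositive) and on its ancestors (nonnegative); summed over [r], each mass
   is a mass of the residual [z], hence at most half its l1 norm. *)
Lemma node_bound i :
  \sum_r delta r i ^+ 2 <= 2 * ((\sum_k `|z k|) / 2) ^+ 2.
Proof.
set S := (\sum_k `|z k|) / 2.
pose a r := \sum_(k in ancestors i) delta r k.
pose b r := \sum_(k in descendants i) delta r k.
have sqr_le_S (W : {set 'I_N}) : (\sum_(k in W) z k) ^+ 2 <= S ^+ 2.
  rewrite -real_normK ?num_real // ler_sqr ?nnegrE ?residual_set_bound //.
  exact: le_trans (residual_set_bound W).
have : \sum_r delta r i ^+ 2 <= \sum_r a r ^+ 2 + \sum_r (- b r) ^+ 2.
  rewrite -big_split /=; apply: ler_sum => r _; rewrite sqrrN.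
  have [a_ge0 da] := ancestors_mass r i; have [b_le0 bd] := descendants_mass r i.
  by apply: sqr_le_bracket; apply/andP.
have : \sum_r a r ^+ 2 <= S ^+ 2.
  apply: le_trans (sqr_le_S (ancestors i)); rewrite [X in _ <= X ^+ 2]exchange_big.
  by apply: sumsq_le_sqr_sum => r _; case: (ancestors_mass r i).
have : \sum_r (- b r) ^+ 2 <= S ^+ 2.
  apply: le_trans (sqr_le_S (descendants i)).
  rewrite [X in _ <= X ^+ 2]exchange_big -sqrrN -sumrN.
  by apply: sumsq_le_sqr_sum => r _; case: (descendants_mass r i); rewrite oppr_ge0.
lra.
Qed.

Lemma dist_le_residual :
  bnorm2 th delta <= N%:R * norm1inf F th / 2 * \sum_k z k ^+ 2.
Proof.
set S := (\sum_k `|z k|) / 2.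
pose m k := \big[Num.max/0]_(r | incident (F r) k) th r k.
have m_ge0 k : 0 <= m k by exact: bigmax_ge_id.
have weighted : bnorm2 th delta <= \sum_k m k * \sum_r delta r k ^+ 2.
  rewrite /bnorm2 /wnorm2 exchange_big /=; apply: ler_sum => k _.
  rewrite mulr_sumr; apply: ler_sum => r _.
  have [rk|nrk] := boolP (incident (F r) k).
    by rewrite ler_wpM2r ?sqr_ge0 //; exact: le_bigmax_cond.
  have -> : delta r k = 0 by apply/eqP; apply: contraR nrk; exact: incident_delta.
  by rewrite expr0n /= !mulr0.
have nodes : \sum_k m k * \sum_r delta r k ^+ 2 <= norm1inf F th * (2 * S ^+ 2).
  by rewrite /norm1inf mulr_suml; apply: ler_sum => k _; rewrite ler_wpM2l ?node_bound.
have cauchy_schwarz : S ^+ 2 <= N%:R / 4 * \sum_k z k ^+ 2.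
  have := sqr_sum_le_card_sumsq xpredT (fun k => `|z k|).
  have -> : \sum_(k in xpredT) `|z k| ^+ 2 = \sum_k z k ^+ 2.
    by apply: eq_bigr => k _; rewrite real_normK ?num_real.
  rewrite cardT size_enum_ord -[\sum_(k in xpredT) _]/(\sum_k `|z k|).
  have -> : \sum_k `|z k| = 2 * S by rewrite /S; field.
  by rewrite exprMn; lra.
have norm_ge0 : 0 <= norm1inf F th by apply: sumr_ge0 => k _; exact: m_ge0.
have := ler_wpM2l norm_ge0 (ler_wpM2l (ler0n _ 2) cauchy_schwarz).
have -> : norm1inf F th * (2 * (N%:R / 4 * \sum_k z k ^+ 2)) =
          N%:R * norm1inf F th / 2 * \sum_k z k ^+ 2 by field.
lra.
Qed.

End ErrorBound.

Section WeightedProjection.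
Variables (K : realFieldType) (N : nat) (Fr : {set 'I_N} -> K) (w : 'I_N -> K).
Hypotheses (F0 : Fr set0 = 0) (w_ge0 : forall i, 0 <= w i)
  (w_pos : forall i, incident Fr i -> 0 < w i).

Lemma wproj_vi u z x : is_wproj (in_base Fr) w u z -> in_base Fr x ->
  0 <= \sum_i w i * (z i - u i) * (x i - z i).
Proof.
move=> [zB z_min] xB; apply: (@first_order_ge0 _ _ (wnorm2 w (fun i => x i - z i))).
  move=> t t_gt0 t_le1; have := z_min _ (in_base_convex zB xB (t := t) _).
  rewrite ltW // t_le1 => /(_ isT).
  have -> : wnorm2 w (fun i => z i + t * (x i - z i) - u i) =
            wnorm2 w (fun i => (z i - u i) + t * (x i - z i)).
    by apply: eq_bigr => i _; congr (_ * _ ^+ 2); ring.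
  by rewrite wnorm2_addZ; lra.
exact: wnorm2_ge0.
Qed.

Lemma wproj_unique u z1 z2 : is_wproj (in_base Fr) w u z1 -> is_wproj (in_base Fr) w u z2 ->
  forall i, z1 i = z2 i.
Proof.
move=> z1P z2P; have vi1 := wproj_vi z1P z2P.1; have vi2 := wproj_vi z2P z1P.1.
have dist0 : wnorm2 w (fun i => z1 i - z2 i) = 0.
  apply/eqP; rewrite eq_le wnorm2_ge0 // andbT.
  suff -> : wnorm2 w (fun i => z1 i - z2 i) =
    - (\sum_i w i * (z1 i - u i) * (z2 i - z1 i) + \sum_i w i * (z2 i - u i) * (z1 i - z2 i)).
    by rewrite oppr_le0 addr_ge0.
  by rewrite /wnorm2 -big_split /= -sumrN; apply: eq_bigr => i _; ring.
move=> i; have [ri|nri] := boolP (incident Fr i); last first.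
  by rewrite (in_base_eq0 F0 z1P.1 nri) (in_base_eq0 F0 z2P.1 nri).
have := psumr_eq0P (fun i _ => mulr_ge0 (w_ge0 i) (sqr_ge0 (z1 i - z2 i))) dist0 (i := i) isT.
by move/eqP; rewrite mulf_eq0 (gt_eqF (w_pos ri)) sqrf_eq0 subr_eq0 => /eqP.
Qed.

End WeightedProjection.

Section ProperDistribution.
Variables (K : realFieldType) (nR : nat) (P : {set 'I_nR} -> K) (alpha : K).
Hypothesis Pprop : alpha_proper P alpha.

Lemma alpha_gt0 : 0 < alpha.
Proof. by case: Pprop => /andP[]. Qed.

Lemma alpha_lt1 : alpha < 1.
Proof. by case: Pprop => /andP[]. Qed.

Lemma P_ge0 C : 0 <= P C.
Proof. by case: Pprop. Qed.

Lemma P_sum1 : \sum_C P C = 1.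
Proof. by case: Pprop. Qed.

Lemma P_sum_in (r : 'I_nR) : \sum_(C : {set 'I_nR} | r \in C) P C = alpha.
Proof. by case: Pprop. Qed.

Lemma P_sum_notin (r : 'I_nR) : \sum_(C : {set 'I_nR} | r \notin C) P C = 1 - alpha.
Proof. by have := P_sum1; rewrite (bigID (fun C : {set 'I_nR} => r \in C)) /= P_sum_in; lra. Qed.

Lemma expect_block_sum (G : {set 'I_nR} -> 'I_nR -> K) :
  \sum_C P C * \sum_(r in C) G C r = \sum_r \sum_(C : {set 'I_nR} | r \in C) P C * G C r.
Proof.
under eq_bigr => C _ do rewrite mulr_sumr.
by rewrite (exchange_big_dep xpredT).
Qed.

Lemma expect_select (a b : 'I_nR -> K) :
  \sum_C P C * \sum_r (if r \in C then a r else b r) =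
  \sum_r (alpha * a r + (1 - alpha) * b r).
Proof.
under eq_bigr => C _ do rewrite mulr_sumr.
rewrite exchange_big /=; apply: eq_bigr => r _.
rewrite (bigID (fun C : {set 'I_nR} => r \in C)) /= -(P_sum_notin r) -(P_sum_in r) !mulr_suml.
by congr (_ + _); apply: eq_bigr => C rC; rewrite ?(negbTE rC) ?rC.
Qed.

End ProperDistribution.

Section Theta.
Variables (K : realFieldType) (N nR : nat) (F : 'I_nR -> {set 'I_N} -> K)
  (P : {set 'I_nR} -> K) (alpha : K).
Hypothesis Pprop : alpha_proper P alpha.
Local Notation th := (theta F P).

Lemma theta_num r i : \sum_(C : {set 'I_nR} | r \in C) P C * (mu F C i)%:R = alpha * th r i.
Proof. by rewrite /theta (P_sum_in Pprop) mulrC divfK // gt_eqF // (alpha_gt0 Pprop). Qed.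

Lemma theta_ge0 r i : 0 <= th r i.
Proof.
rewrite /theta (P_sum_in Pprop) divr_ge0 ?(ltW (alpha_gt0 Pprop)) //.
by apply: sumr_ge0 => C _; rewrite mulr_ge0 ?(P_ge0 Pprop).
Qed.

Lemma theta_ge1 r i : incident (F r) i -> 1 <= th r i.
Proof.
move=> ri; rewrite /theta (P_sum_in Pprop) ler_pdivlMr ?(alpha_gt0 Pprop) // mul1r.
rewrite -{1}(P_sum_in Pprop r); apply: ler_sum => C rC.
rewrite ler_peMr ?(P_ge0 Pprop) // ler1n card_gt0; apply/set0Pn.
by exists r; rewrite inE rC ri.
Qed.

Lemma theta_gt0 r i : incident (F r) i -> 0 < th r i.
Proof. by move/theta_ge1; exact: lt_le_trans. Qed.

Lemma norm1inf_ge : (forall i, exists r, incident (F r) i) -> N%:R <= norm1inf F th.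
Proof.
move=> Finc; rewrite -[N in N%:R]card_ord -sumr_const; apply: ler_sum => i _.
have [r ri] := Finc i; apply: le_trans (theta_ge1 ri) _.
exact: (le_bigmax_cond _ (fun r => th r i) ri).
Qed.

End Theta.

Section Optimum.
Variables (K : realFieldType) (N nR : nat) (F : 'I_nR -> {set 'I_N} -> K)
  (f : 'I_nR -> ('I_N -> K) -> K) (xstar : 'I_N -> K).
Hypotheses (f_lovasz : forall r x, lovasz_value (F r) x (f r x))
  (xstar_opt : forall x, \sum_r f r xstar + 2^-1 * \sum_i xstar i ^+ 2
                         <= \sum_r f r x + 2^-1 * \sum_i x i ^+ 2).

Local Notation Q := (\sum_i xstar i ^+ 2).

Lemma lovasz_scale r x t : 0 <= t -> f r (fun i => t * x i) = t * f r x.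
Proof.
move=> t_ge0; have [[u uB fu] u_max] := f_lovasz r x.
have [[v vB fv] v_max] := f_lovasz r (fun i => t * x i).
have scale (a : 'I_N -> K) : \sum_i a i * (t * x i) = t * \sum_i a i * x i.
  by rewrite mulr_sumr; apply: eq_bigr => i _; ring.
apply/eqP; rewrite eq_le; apply/andP; split.
  by rewrite -fv scale ler_wpM2l // u_max.
by rewrite -fu -scale v_max.
Qed.

(* Optimality of [xstar] along the ray [s |-> (1 - s) xstar], using positive
   homogeneity of the Lovasz extensions. *)
Lemma sum_lovasz_xstar_le : \sum_r f r xstar <= - Q.
Proof.
set Fs := \sum_r f r xstar.
have Q_ge0 : 0 <= Q by apply: sumr_ge0 => i _; exact: sqr_ge0.
suff : 0 <= (- Fs - Q) / 2 by rewrite pmulr_lge0 //; lra.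
apply: (@first_order_ge0 _ _ (Q / 2)) => [s s_gt0 s_le1|]; last by rewrite divr_ge0.
have := xstar_opt (fun i => (1 - s) * xstar i).
have -> : \sum_r f r (fun i => (1 - s) * xstar i) = (1 - s) * Fs.
  by rewrite mulr_sumr; apply: eq_bigr => r _; apply: lovasz_scale; lra.
have -> : \sum_i ((1 - s) * xstar i) ^+ 2 = (1 - s) ^+ 2 * Q.
  by rewrite mulr_sumr; apply: eq_bigr => i _; ring.
have -> : 2 * s * ((- Fs - Q) / 2) + s ^+ 2 * (Q / 2) =
  ((1 - s) * Fs + 2^-1 * ((1 - s) ^+ 2 * Q)) - (Fs + 2^-1 * Q) by field.
rewrite -/Fs; lra.
Qed.

Lemma Aop_dot_xstar_le v : in_Bprod F v -> \sum_i Aop v i * xstar i <= - Q.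
Proof.
move=> vB; apply: le_trans sum_lovasz_xstar_le.
under eq_bigr => i _ do rewrite mulr_suml.
rewrite exchange_big /=; apply: ler_sum => r _; exact: (f_lovasz r xstar).2 _ (vB r).
Qed.

Lemma gfun_ge_residual v : in_Bprod F v ->
  Q / 2 + 2^-1 * \sum_i (Aop v i + xstar i) ^+ 2 <= gfun v.
Proof.
move=> vB; have := Aop_dot_xstar_le vB; rewrite /gfun.
have -> : \sum_i (Aop v i + xstar i) ^+ 2 =
    \sum_i Aop v i ^+ 2 + 2 * \sum_i Aop v i * xstar i + Q.
  by rewrite [2 * _]mulr_sumr -!big_split /=; apply: eq_bigr => i _; ring.
lra.
Qed.

Lemma gfun_Xi xi : Xi F xstar xi -> gfun xi = Q / 2.
Proof.
case=> _ xiA; rewrite /gfun mulrC; congr (_ * _).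
by apply: eq_bigr => i _; rewrite xiA sqrrN.
Qed.

Lemma gstar_eq gstar : is_min (in_Bprod F) (@gfun K N nR) gstar ->
  (exists xi, Xi F xstar xi) -> gstar = Q / 2.
Proof.
move=> [[v vB <-] g_min] [xi xiX]; apply/eqP; rewrite eq_le.
rewrite -{1}(gfun_Xi xiX) g_min /=; last exact: xiX.1.
have := gfun_ge_residual vB.
have : 0 <= \sum_i (Aop v i + xstar i) ^+ 2 by apply: sumr_ge0 => i _; exact: sqr_ge0.
lra.
Qed.

End Optimum.

Definition lyapunov (K : realFieldType) (N nR : nat) (gstar : K)
  (D : ('I_nR -> 'I_N -> K) -> K) (v : 'I_nR -> 'I_N -> K) : K :=
  gfun v - gstar + 2^-1 * D v.

Section OneStep.
Variables (K : realFieldType) (N nR : nat) (F : 'I_nR -> {set 'I_N} -> K)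
  (P : {set 'I_nR} -> K) (alpha : K) (xstar : 'I_N -> K) (gstar : K)
  (D : ('I_nR -> 'I_N -> K) -> K).
Local Notation th := (theta F P).
Hypotheses (F0 : forall r, F r set0 = 0) (Pprop : alpha_proper P alpha)
  (gstarE : gstar = (\sum_i xstar i ^+ 2) / 2)
  (D_min : forall yy, is_min (Xi F xstar)
     (fun z => bnorm2 th (fun r i => yy r i - z r i)) (D yy)).
Variables (v w : 'I_nR -> 'I_N -> K) (next : {set 'I_nR} -> 'I_nR -> 'I_N -> K).
Hypotheses (vB : in_Bprod F v)
  (w_proj : forall r, is_wproj (in_base (F r)) (th r)
     (fun i => v r i - (th r i)^-1 * Aop v i) (w r))
  (next_sel : forall C r i, next C r i = if r \in C then w r i else v r i).

Let h r i := w r i - v r i.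

Lemma step_eq0 r i : ~~ incident (F r) i -> h r i = 0.
Proof.
by move=> nri; rewrite /h (in_base_eq0 (F0 r) (w_proj r).1 nri) (in_base_eq0 (F0 r) (vB r) nri) subrr.
Qed.

Lemma gfun_next C : gfun (next C) =
  gfun v + \sum_i Aop v i * \sum_(r in C) h r i + 2^-1 * \sum_i (\sum_(r in C) h r i) ^+ 2.
Proof.
have A_next i : Aop (next C) i = Aop v i + \sum_(r in C) h r i.
  rewrite /Aop (big_mkcond (fun r => r \in C)) -big_split /=; apply: eq_bigr => r _.
  by rewrite next_sel /h; case: (r \in C); rewrite ?addr0 // addrC subrK.
rewrite /gfun (eq_bigr (fun i => Aop v i ^+ 2 + 2 * (Aop v i * \sum_(r in C) h r i)
                                 + (\sum_(r in C) h r i) ^+ 2)) => [|i _]; last first.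
  by rewrite A_next; ring.
by rewrite !big_split /= -mulr_sumr; field.
Qed.

(* Expected separable overapproximation: on coordinate [i] only the [mu F C i]
   blocks of [C] incident to [i] contribute, and [theta] averages [mu]. *)
Lemma separable_overapprox :
  \sum_C P C * \sum_i (\sum_(r in C) h r i) ^+ 2 <= alpha * bnorm2 th h.
Proof.
have block_sq (C : {set 'I_nR}) i : (\sum_(r in C) h r i) ^+ 2 <= (mu F C i)%:R * \sum_(r in C) h r i ^+ 2.
  set A := [set r in C | incident (F r) i].
  have restrict (g : 'I_nR -> K) : (forall r, ~~ incident (F r) i -> g r = 0) ->
      \sum_(r in C) g r = \sum_(r in A) g r.
    move=> g_eq0; rewrite (big_setID A) /= [X in _ + X]big1 ?addr0.
      by apply: eq_bigl => r; rewrite !inE andbA andbb.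
    by move=> r; rewrite !inE => /andP[]; case: (r \in C) => //= /g_eq0.
  rewrite (restrict (fun r => h r i)) => [|r /step_eq0 //].
  rewrite (restrict (fun r => h r i ^+ 2)) => [|r /step_eq0 -> //]; last by rewrite expr0n.
  exact: sqr_sum_le_card_sumsq.
apply: le_trans (_ : \sum_C P C * \sum_(r in C) \sum_i (mu F C i)%:R * h r i ^+ 2 <= _).
  apply: ler_sum => C _; rewrite ler_wpM2l ?(P_ge0 Pprop) // exchange_big /=.
  by apply: ler_sum => i _; rewrite -mulr_sumr block_sq.
rewrite expect_block_sum /bnorm2 /wnorm2 mulr_sumr le_eqVlt; apply/orP; left.
apply/eqP/eq_bigr => r _; under eq_bigr => C _ do rewrite mulr_sumr.
rewrite exchange_big mulr_sumr /=; apply: eq_bigr => i _.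
by rewrite mulrA -(theta_num F Pprop) mulr_suml; apply: eq_bigr => C _; ring.
Qed.

Lemma expect_gfun_next : \sum_C P C * gfun (next C) <=
  gfun v + alpha * (\sum_r \sum_i Aop v i * h r i + 2^-1 * bnorm2 th h).
Proof.
under eq_bigr => C _ do rewrite gfun_next !mulrDr.
rewrite !big_split /= -mulr_suml (P_sum1 Pprop) mul1r.
have -> : \sum_C P C * \sum_i Aop v i * \sum_(r in C) h r i =
          alpha * \sum_r \sum_i Aop v i * h r i.
  under eq_bigr => C _ do under eq_bigr => i _ do rewrite mulr_sumr.
  under eq_bigr => C _ do rewrite exchange_big /=.
  rewrite expect_block_sum mulr_sumr; apply: eq_bigr => r _.
  by rewrite -mulr_suml (P_sum_in Pprop) mulrC.
have -> : \sum_C P C * (2^-1 * \sum_i (\sum_(r in C) h r i) ^+ 2) =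
          2^-1 * \sum_C P C * \sum_i (\sum_(r in C) h r i) ^+ 2.
  by rewrite mulr_sumr; apply: eq_bigr => C _; ring.
by have := separable_overapprox; lra.
Qed.

Lemma expect_D_next xi : Xi F xstar xi ->
  \sum_C P C * D (next C) <=
  alpha * bnorm2 th (fun r i => w r i - xi r i) + (1 - alpha) * bnorm2 th (fun r i => v r i - xi r i).
Proof.
move=> xiX; apply: le_trans (_ : \sum_C P C * \sum_r (if r \in C
    then wnorm2 (th r) (fun i => w r i - xi r i) else wnorm2 (th r) (fun i => v r i - xi r i)) <= _).
  apply: ler_sum => C _; rewrite ler_wpM2l ?(P_ge0 Pprop) //.
  apply: le_trans ((D_min (next C)).2 _ xiX) _; apply: ler_sum => r _.
  by case: ifP => rC; apply: ler_sum => i _; rewrite next_sel rC.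
by rewrite (expect_select Pprop) big_split /= -!mulr_sumr.
Qed.

(* The variational inequality of the full step [w] tested at [xi], rewritten
   with the step [h = w - v] and the gradient [A v]. *)
Lemma step_vi xi : in_Bprod F xi ->
  0 <= \sum_r \sum_i (th r i * h r i + Aop v i) * (xi r i - v r i - h r i).
Proof.
move=> xiB; apply: sumr_ge0 => r _.
apply: le_trans (wproj_vi (theta_ge0 F Pprop r) (w_proj r) (xiB r)) _.
rewrite le_eqVlt; apply/orP; left; apply/eqP/eq_bigr => i _.
have [ri|nri] := boolP (incident (F r) i).
  by rewrite /h; field; rewrite gt_eqF // (theta_gt0 Pprop).
rewrite /h (in_base_eq0 (F0 r) (w_proj r).1 nri) (in_base_eq0 (F0 r) (vB r) nri).
by rewrite (in_base_eq0 (F0 r) (xiB r) nri) !subrr !mulr0.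
Qed.

(* The variational inequality trades [alpha (L + H - T)] for [alpha W], and
   [gstar = g(xi)] expresses [W] through [gstar - g(v)] and the residual [a]. *)
Lemma expect_lyapunov_next xi : Xi F xstar xi ->
  \sum_C P C * lyapunov gstar D (next C) <=
  (1 - alpha) * (gfun v - gstar) - alpha / 2 * \sum_i (Aop v i + xstar i) ^+ 2
  + 2^-1 * bnorm2 th (fun r i => v r i - xi r i).
Proof.
move=> [xiB xiA]; pose e r i := xi r i - v r i.
set L := \sum_r \sum_i Aop v i * h r i; set H := bnorm2 th h.
set T := \sum_r \sum_i th r i * h r i * e r i; set W := \sum_r \sum_i Aop v i * e r i.
set a := \sum_i (Aop v i + xstar i) ^+ 2; set E := bnorm2 th (fun r i => v r i - xi r i).
have Eg := expect_gfun_next; have ED := expect_D_next (conj xiB xiA).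
have Ew : bnorm2 th (fun r i => w r i - xi r i) = H - 2 * T + E.
  have -> : E = bnorm2 th e.
    by apply: eq_bigr => r _; apply: eq_bigr => i _; rewrite /e -sqrrN opprB.
  have -> : bnorm2 th (fun r i => w r i - xi r i) = bnorm2 th (fun r i => h r i + (-1) * e r i).
    by apply: eq_bigr => r _; apply: eq_bigr => i _; rewrite /h /e; congr (_ * _ ^+ 2); ring.
  by rewrite bnorm2_addZ -/H -/T; ring.
have vi : 0 <= T - H + W - L.
  have := step_vi xiB; congr (_ <= _).
  rewrite /T /H /W /L /bnorm2 /wnorm2 -sumrB -big_split /= -sumrB; apply: eq_bigr => r _.
  by rewrite -sumrB -big_split /= -sumrB; apply: eq_bigr => i _; rewrite /e; ring.
have gstar_split : gstar = gfun v + W + a / 2.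
  have W_eq : W = \sum_i Aop v i * (- xstar i - Aop v i).
    rewrite /W exchange_big /=; apply: eq_bigr => i _.
    by rewrite -mulr_sumr /e sumrB -/(Aop xi i) -/(Aop v i) xiA.
  rewrite gstarE W_eq /gfun /a !mulr_sumr !mulr_suml -!big_split /=.
  by apply: eq_bigr => i _; field.
have -> : \sum_C P C * lyapunov gstar D (next C) =
    \sum_C P C * gfun (next C) - gstar + 2^-1 * \sum_C P C * D (next C).
  rewrite /lyapunov (eq_bigr (fun C => P C * gfun (next C) - gstar * P C
      + 2^-1 * (P C * D (next C)))) => [|C _]; last by ring.
  by rewrite big_split sumrB /= -!mulr_sumr (P_sum1 Pprop) mulr1.
rewrite Ew in ED; have := mulr_ge0 (ltW (alpha_gt0 Pprop)) vi.
move: Eg ED; rewrite -/L -/H -/E gstar_split; lra.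
Qed.

End OneStep.

Section Contraction.
Variable K : realFieldType.

Lemma rate_le_alpha (alpha M : K) : 0 <= alpha -> 2 <= M -> 4 * alpha / (M + 2) <= alpha.
Proof. by move=> alpha_ge0 M_ge2; rewrite ler_pdivrMr; nra. Qed.

Lemma lyapunov_contraction_arith (alpha M G a E : K) :
  0 <= alpha -> 2 <= M -> E <= M / 2 * a -> a / 2 <= G ->
  (1 - alpha) * G - alpha / 2 * a + 2^-1 * E <= (1 - 4 * alpha / (M + 2)) * (G + 2^-1 * E).
Proof.
move=> alpha_ge0 M_ge2 E_le aG; set c := 4 * alpha / (M + 2).
have c_le := rate_le_alpha alpha_ge0 M_ge2.
have c_ge0 : 0 <= c by rewrite divr_ge0 //; lra.
have cM : c * (M + 2) = 4 * alpha by rewrite divfK //; lra.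
have cE : c * E <= (2 * alpha - c) * a.
  apply: le_trans (ler_wpM2l c_ge0 E_le) _.
  have -> : c * (M / 2 * a) = c * (M + 2) / 2 * a - c * a by field.
  by rewrite cM; lra.
have : 0 <= (alpha - c) * (G - a / 2) by rewrite mulr_ge0 // subr_ge0.
lra.
Qed.

Lemma sum_tuple_rcons (T : finType) (k : nat) (G : seq T -> K) :
  \sum_(t : k.+1.-tuple T) G t = \sum_(s : k.-tuple T) \sum_(C : T) G (rcons s C).
Proof.
rewrite pair_big /=.
pose h (p : k.-tuple T * T) := [tuple of rcons p.1 p.2].
pose g (t : k.+1.-tuple T) := ([tuple of belast (thead t) (behead t)], last (thead t) (behead t)).
have hg : cancel g h.
  by move=> t; apply: val_inj => /=; rewrite -lastI; case: t => -[|x s].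
have gh : cancel h g.
  move=> [s C]; rewrite /g /h /=.
  have : rcons s C = thead [tuple of rcons s C] :: behead [tuple of rcons s C].
    by case: s => -[|x s].
  rewrite lastI => /rcons_inj [E1 E2].
  by congr (_, _); [apply: val_inj; rewrite /= -E1 | rewrite -E2].
by rewrite (reindex h) //; exists g => t _; [exact: gh | exact: hg].
Qed.

Lemma expect_tuple_contraction (T : finType) (P : T -> K) (Phi : seq T -> K) (rho : K) :
  0 <= rho -> (forall C, 0 <= P C) ->
  (forall s, \sum_C P C * Phi (rcons s C) <= rho * Phi s) ->
  forall k, \sum_(s : k.-tuple T) (\prod_(j < k) P (tnth s j)) * Phi s <= rho ^+ k * Phi [::].
Proof.
move=> rho_ge0 P_ge0 step k.
have -> : \sum_(s : k.-tuple T) (\prod_(j < k) P (tnth s j)) * Phi s =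
          \sum_(s : k.-tuple T) (\prod_(C <- s) P C) * Phi s.
  by apply: eq_bigr => s _; rewrite big_tuple.
elim: k => [|k IHk].
  rewrite (eq_bigr (fun _ => Phi [::])) => [|s _]; last by rewrite tuple0 big_nil mul1r.
  by rewrite sumr_const card_tuple expr0 mul1r.
rewrite (sum_tuple_rcons k (fun s => (\prod_(C <- s) P C) * Phi s)) exprS -mulrA.
apply: le_trans (ler_wpM2l rho_ge0 IHk); rewrite mulr_sumr; apply: ler_sum => s _.
rewrite [leLHS](eq_bigr (fun C => (\prod_(C0 <- s) P C0) * (P C * Phi (rcons s C)))) => [|C _].
  by rewrite -mulr_sumr mulrCA ler_wpM2l ?prodr_ge0.
by rewrite -cats1 big_cat big_seq1 /= mulrA.
Qed.

End Contraction.

Lemma in_Bprod_N1 (K : realFieldType) (N nR : nat) (F : 'I_nR -> {set 'I_N} -> K) v w :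
  N = 1%N -> in_Bprod F v -> in_Bprod F w -> forall r i, v r i = w r i.
Proof.
move=> N1 vB wB r i.
have sum_single (u : 'I_N -> K) : \sum_j u j = u i.
  rewrite (bigD1 i) //= big1 ?addr0 // => j /eqP ji; exfalso; apply: ji; apply: val_inj.
  have : (val i < 1)%N by rewrite -[1%N]N1 ltn_ord.
  have : (val j < 1)%N by rewrite -[1%N]N1 ltn_ord.
  by case: (val i); case: (val j).
by rewrite -sum_single (vB r).2 -(wB r).2 sum_single.
Qed.

Section Algorithm.
Variables (K : realFieldType) (N nR : nat)
  (F : 'I_nR -> {set 'I_N} -> K) (P : {set 'I_nR} -> K) (alpha : K)
  (f : 'I_nR -> ('I_N -> K) -> K) (xstar : 'I_N -> K) (gstar : K)
  (D : ('I_nR -> 'I_N -> K) -> K).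
Local Notation th := (theta F P).
Hypotheses (Fsub : forall r, submodular (F r)) (F0 : forall r, F r set0 = 0)
  (Finc : forall i, exists r, incident (F r) i) (Pprop : alpha_proper P alpha)
  (f_lovasz : forall r x, lovasz_value (F r) x (f r x))
  (xstar_opt : forall x, \sum_r f r xstar + 2^-1 * \sum_i xstar i ^+ 2
                         <= \sum_r f r x + 2^-1 * \sum_i x i ^+ 2)
  (g_min : is_min (in_Bprod F) (@gfun K N nR) gstar)
  (D_min : forall yy, is_min (Xi F xstar)
     (fun z => bnorm2 th (fun r i => yy r i - z r i)) (D yy)).

Lemma gstarE : gstar = (\sum_i xstar i ^+ 2) / 2.
Proof.
apply: (gstar_eq f_lovasz xstar_opt g_min).
by have [[xi xiX _] _] := D_min (fun _ _ => 0); exists xi.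
Qed.

Lemma scaled_norm1inf_ge2 : (1 < N)%N -> 2 <= N%:R * norm1inf F th.
Proof.
move=> N_gt1; have N_ge2 : 2 <= N%:R :> K by rewrite ler_nat.
by have := norm1inf_ge Pprop Finc; nra.
Qed.

Lemma rate_ge0 : (1 < N)%N -> 0 <= 1 - 4 * alpha / (N%:R * norm1inf F th + 2).
Proof.
move=> N_gt1; have := rate_le_alpha (ltW (alpha_gt0 Pprop)) (scaled_norm1inf_ge2 N_gt1).
by have := alpha_lt1 Pprop; lra.
Qed.

Lemma lyapunov_eq0_N1 v : N = 1%N -> in_Bprod F v -> lyapunov gstar D v = 0.
Proof.
move=> N1 vB; have [[u uB gu] _] := g_min; have [[xi xiX Dv] D_le] := D_min v.
have g_eq : gfun v = gstar.
  rewrite -gu /gfun; congr (_ * _); apply: eq_bigr => i _.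
  by congr (_ ^+ 2); apply: eq_bigr => r _; exact: in_Bprod_N1.
have D0 : D v = 0.
  rewrite -Dv /bnorm2 big1 // => r _; rewrite /wnorm2 big1 // => i _.
  by rewrite (in_Bprod_N1 N1 vB xiX.1) subrr expr0n mulr0.
by rewrite /lyapunov g_eq D0 subrr mulr0 addr0.
Qed.

Lemma lyapunov_step (v w : 'I_nR -> 'I_N -> K) (next : {set 'I_nR} -> 'I_nR -> 'I_N -> K) :
  (1 < N)%N -> in_Bprod F v ->
  (forall r, is_wproj (in_base (F r)) (th r) (fun i => v r i - (th r i)^-1 * Aop v i) (w r)) ->
  (forall C r i, next C r i = if r \in C then w r i else v r i) ->
  \sum_C P C * lyapunov gstar D (next C) <=
  (1 - 4 * alpha / (N%:R * norm1inf F th + 2)) * lyapunov gstar D v.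
Proof.
move=> N_gt1 vB w_proj next_sel; have [[xi xiX Dv] D_le] := D_min v.
set a := \sum_i (Aop v i + xstar i) ^+ 2.
have [r0 _] := Finc (Ordinal (ltnW N_gt1)).
have dist_le : D v <= N%:R * norm1inf F th / 2 * a.
  rewrite -Dv; have := dist_le_residual Fsub F0 vB xiX.1 (theta_ge0 F Pprop)
    (fun r i => theta_gt0 Pprop (r := r) (i := i)) _ r0.
  have -> : \sum_k (\sum_r (v r k - xi r k)) ^+ 2 = a.
    by apply: eq_bigr => k _; rewrite sumrB -/(Aop v k) -/(Aop xi k) xiX.2 opprK.
  apply=> xi' xi'B xi'A; rewrite Dv; apply: D_le; split=> // i.
  by rewrite xi'A xiX.2.
have gap : a / 2 <= gfun v - gstar.
  by have := gfun_ge_residual f_lovasz xstar_opt vB; rewrite gstarE -/a; lra.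
apply: le_trans (expect_lyapunov_next F0 Pprop gstarE D_min vB w_proj next_sel xiX) _.
rewrite /lyapunov -Dv; apply: lyapunov_contraction_arith => //.
- exact: ltW (alpha_gt0 Pprop).
- exact: scaled_norm1inf_ge2.
- by rewrite Dv.
Qed.

End Algorithm.

Section Iterates.
Variables (K : realFieldType) (N nR : nat) (F : 'I_nR -> {set 'I_N} -> K)
  (P : {set 'I_nR} -> K) (alpha : K) (y : seq {set 'I_nR} -> 'I_nR -> 'I_N -> K).
Local Notation th := (theta F P).
Hypotheses (F0 : forall r, F r set0 = 0) (Pprop : alpha_proper P alpha)
  (y0B : in_Bprod F (y [::]))
  (y_proj : forall s (C : {set 'I_nR}) r, r \in C -> is_wproj (in_base (F r)) (th r)
     (fun i => y s r i - (th r i)^-1 * Aop (y s) i) (y (rcons s C) r))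
  (y_stay : forall s (C : {set 'I_nR}) r, r \notin C -> y (rcons s C) r = y s r).

Lemma iterate_in_Bprod s : in_Bprod F (y s).
Proof.
elim/last_ind: s => // s C IHs r.
by have [rC|rC] := boolP (r \in C); [exact: (y_proj s rC).1 | rewrite y_stay].
Qed.

Lemma iterate_select s C r i :
  y (rcons s C) r i = if r \in C then y (rcons s setT) r i else y s r i.
Proof.
case: ifP => [rC|/negbT rC]; last by rewrite y_stay.
exact: (wproj_unique (F0 r) (theta_ge0 F Pprop r) (fun j => theta_gt0 Pprop (r := r) (i := j))
  (y_proj s rC) (y_proj s (in_setT r))).
Qed.

End Iterates.

(* [y s] is the iterate after the history [s] of drawn sets; the expectation
   over [k] independent draws from [P] is the sum over all [k]-tuples of sets
   weighted by the product of their probabilities. *)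
Theorem theorem3p10 (K : realFieldType) (N nR : nat)
  (F : 'I_nR -> {set 'I_N} -> K) (P : {set 'I_nR} -> K) (alpha : K)
  (f : 'I_nR -> ('I_N -> K) -> K) (xstar : 'I_N -> K) (gstar : K)
  (D : ('I_nR -> 'I_N -> K) -> K)
  (y : seq {set 'I_nR} -> 'I_nR -> 'I_N -> K) :
  (0 < N)%N -> (0 < nR)%N ->
  (forall r, submodular (F r)) ->
  (forall r, F r set0 = 0) ->
  (forall i, exists r, incident (F r) i) ->
  alpha_proper P alpha ->
  (* f r = Lovasz extension of F r *)
  (forall r x, lovasz_value (F r) x (f r x)) ->
  (* x^* minimizes sum_r f_r(x) + 1/2 ||x||^2 *)
  (forall x, \sum_r f r xstar + 2^-1 * \sum_i xstar i ^+ 2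
             <= \sum_r f r x + 2^-1 * \sum_i x i ^+ 2) ->
  (* g^* = min_{y in B} g(y) *)
  is_min (in_Bprod F) (@gfun K N nR) gstar ->
  (* D y = d_theta^2(y, Xi) *)
  (forall yy, is_min (Xi F xstar)
                (fun z => bnorm2 (theta F P) (fun r i => yy r i - z r i)) (D yy)) ->
  (* Algorithm 1 *)
  in_Bprod F (y [::]) ->
  (forall (s : seq {set 'I_nR}) (C : {set 'I_nR}) (r : 'I_nR), r \in C ->
     is_wproj (in_base (F r)) (theta F P r)
       (fun i => y s r i - (theta F P r i)^-1 * Aop (y s) i)
       (y (rcons s C) r)) ->
  (forall (s : seq {set 'I_nR}) (C : {set 'I_nR}) (r : 'I_nR), r \notin C -> y (rcons s C) r = y s r) ->
  forall k : nat,
    \sum_(s : k.-tuple {set 'I_nR})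
        (\prod_(j < k) P (tnth s j)) *
        (gfun (y (tval s)) - gstar + 2^-1 * D (y (tval s)))
    <= (1 - 4 * alpha / (N%:R * norm1inf F (theta F P) + 2)) ^+ k *
       (gfun (y [::]) - gstar + 2^-1 * D (y [::])).
Proof.
move=> N_gt0 _ Fsub F0 Finc Pprop f_lovasz xstar_opt g_min D_min y0B y_proj y_stay k.
have yB := iterate_in_Bprod y0B y_proj y_stay.
have [N1|N_gt1] := leqP N 1.
  have N_eq1 : N = 1%N by apply/eqP; rewrite eqn_leq N1.
  have lyap0 s : gfun (y s) - gstar + 2^-1 * D (y s) = 0.
    by have := lyapunov_eq0_N1 g_min D_min N_eq1 (yB s).
  by rewrite lyap0 mulr0 big1 // => s _; rewrite lyap0 mulr0.
apply: (expect_tuple_contraction (Phi := fun s => lyapunov gstar D (y s))).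
- exact: rate_ge0 Finc Pprop N_gt1.
- exact: P_ge0 Pprop.
move=> s; apply: (lyapunov_step Fsub F0 Finc Pprop f_lovasz xstar_opt g_min D_min N_gt1 (yB s)).
- by move=> r; exact: y_proj (in_setT r).
- exact: iterate_select F0 Pprop y_proj y_stay s.
Qed.
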